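(* Let $T$, $S$, $A$ be closed Hermitian subspaces in $X^2$ with $D(T)=D(S)=:D\subset D(A)$ and $T=S+A$, and assume $\rho(T)\cap\rho(S)\neq\emptyset$. (i) If $A_s$ restricted to $D$ is a finite rank operator, then $T$ is a finite rank perturbation of $S$. (ii) If $T$ is a finite rank perturbation of $S$ and $T(0)^\perp$ reduces both $S$ and $A$, then $A_s$ restricted to $D$ is a finite rank operator.
   Context: $X$ is a complex Hilbert space and $X^2=X\times X$ carries the inner product $\langle (x,f),(y,g)\rangle=\langle x,y\rangle+\langle f,g\rangle$. A subspace $T$ in $X^2$ means a linear subspace of $X^2$ (a linear relation); a linear operator in $X$ is identified with its graph. Notation: $D(T)=\{x:(x,f)\in T \text{ for some } f\}$, $T(x)=\{f:(x,f)\in T\}$, $T^{-1}=\{(f,x):(x,f)\in T\}$, $\lambda I$ is the graph of $x\mapsto \lambda x$. The adjoint is $T^*=\{(y,g)\in X^2:\langle g,x\rangle=\langle y,f\rangle \text{ for all }(x,f)\in T\}$; $T$ is Hermitian if $T\subset T^*$. For subspaces $S,A$ in $X^2$, $S+A=\{(x,f+g):(x,f)\in S,(x,g)\in A\}$. For a closed subspace $T$, set $T_\infty=\{(0,g)\in X^2:(0,g)\in T\}$ and $T_s=T\ominus T_\infty$ (orthogonal complement of $T_\infty$ in $T$), so $T=T_s\oplus T_\infty$; $T_s$ is the graph of a linear operator (the operator part of $T$) with $D(T_s)=D(T)$ and $R(T_s)\subset T(0)^\perp$. Resolvent set: $\rho(T)=\{\lambda\in\mathbb C:(\lambda I-T)^{-1}$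 is a bounded linear operator defined on all of $X\}$. Reducing subspace: a closed subspace $X_1\subset X$ with orthogonal projection $P$ onto it reduces $T$ if $\{(Px,Pf):(x,f)\in T\}\subset T$. Finite rank perturbation: for closed subspaces $T,S$ in $X^2$ with orthogonal projections $P_T,P_S$ of $X^2$ onto $T$, $S$, $T$ is a finite rank perturbation of $S$ if $P_T-P_S$ has finite-dimensional range. *)

From Stdlib Require Import Reals List.
Open Scope R_scope.
Set Implicit Arguments.

Record C : Type := mkC { Re : R ; Im : R }.
Definition C0 : C := mkC 0 0.
Definition C1 : C := mkC 1 0.
Definition Cadd (a b : C) : C := mkC (Re a + Re b) (Im a + Im b).
Definition Copp (a : C) : C := mkC (- Re a) (- Im a).
Definition Cmul (a b : C) : C :=
  mkC (Re a * Re b - Im a * Im b) (Re a * Im b + Im a * Re b).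
Definition Cconj (a : C) : C := mkC (Re a) (- Im a).

Record HilbertSpace : Type := {
  car :> Type;
  zero : car;
  add : car -> car -> car;
  opp : car -> car;
  scal : C -> car -> car;
  inner : car -> car -> C;
  add_assoc : forall x y z, add x (add y z) = add (add x y) z;
  add_comm : forall x y, add x y = add y x;
  add_zero : forall x, add x zero = x;
  add_opp : forall x, add x (opp x) = zero;
  scal_one : forall x, scal C1 x = x;
  scal_assoc : forall a b x, scal a (scal b x) = scal (Cmul a b) x;
  scal_distr_vec : forall a x y, scal a (add x y) = add (scal a x) (scal a y);
  scal_distr_sc : forall a b x, scal (Cadd a b) x = add (scal a x) (scal b x);
  inner_add_l : forall x y z, inner (add x y) z = Cadd (inner x z) (inner y z);
  inner_scal_l : forall a x y, inner (scal a x) y = Cmul a (inner x y);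
  inner_conj : forall x y, inner y x = Cconj (inner x y);
  inner_pos : forall x, 0 <= Re (inner x x);
  inner_def : forall x, inner x x = C0 -> x = zero;
  complete : forall u : nat -> car,
    (forall eps, eps > 0 -> exists N, forall n m, (n >= N)%nat -> (m >= N)%nat ->
        sqrt (Re (inner (add (u n) (opp (u m))) (add (u n) (opp (u m))))) < eps) ->
    exists l, forall eps, eps > 0 -> exists N, forall n, (n >= N)%nat ->
        sqrt (Re (inner (add (u n) (opp l)) (add (u n) (opp l)))) < eps
}.

Section Defs.
Context {X : HilbertSpace}.

Definition sub (x y : X) : X := add X x (opp X y).
Definition norm (x : X) : R := sqrt (Re (inner X x x)).

Definition zero2 : X * X := (zero X, zero X).
Definition add2 (p q : X * X) : X * X := (add X (fst p) (fst q), add X (snd p) (snd q)).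
Definition scal2 (a : C) (p : X * X) : X * X := (scal X a (fst p), scal X a (snd p)).
Definition sub2 (p q : X * X) : X * X := (sub (fst p) (fst q), sub (snd p) (snd q)).
Definition inner2 (p q : X * X) : C :=
  Cadd (inner X (fst p) (fst q)) (inner X (snd p) (snd q)).
Definition norm2 (p : X * X) : R := sqrt (Re (inner2 p p)).

Definition is_subspace_X (M : X -> Prop) : Prop :=
  M (zero X) /\ (forall x y, M x -> M y -> M (add X x y)) /\
  (forall a x, M x -> M (scal X a x)).

Definition is_closed_X (M : X -> Prop) : Prop :=
  forall (u : nat -> X) (l : X), (forall n, M (u n)) ->
    (forall eps, eps > 0 -> exists N, forall n, (n >= N)%nat -> norm (sub (u n) l) < eps) ->
    M l.

Definition is_subspace2 (T : X * X -> Prop) : Prop :=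
  T zero2 /\ (forall p q, T p -> T q -> T (add2 p q)) /\
  (forall a p, T p -> T (scal2 a p)).

Definition is_closed2 (T : X * X -> Prop) : Prop :=
  forall (u : nat -> X * X) (l : X * X), (forall n, T (u n)) ->
    (forall eps, eps > 0 -> exists N, forall n, (n >= N)%nat -> norm2 (sub2 (u n) l) < eps) ->
    T l.

Definition closed_subspace2 (T : X * X -> Prop) : Prop :=
  is_subspace2 T /\ is_closed2 T.

Definition dom (T : X * X -> Prop) (x : X) : Prop := exists f, T (x, f).
Definition img_at (T : X * X -> Prop) (x : X) (f : X) : Prop := T (x, f).

Definition adjoint (T : X * X -> Prop) : X * X -> Prop :=
  fun q => forall p, T p -> inner X (snd q) (fst p) = inner X (fst q) (snd p).

Definition hermitian (T : X * X -> Prop) : Prop := forall p, T p -> adjoint T p.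

Definition rel_sum (S A : X * X -> Prop) : X * X -> Prop :=
  fun p => exists f g, S (fst p, f) /\ A (fst p, g) /\ snd p = add X f g.

(* (lambda I - T)^{-1} = {(lambda x - f, x) : (x,f) in T} *)
Definition resolvent_rel (T : X * X -> Prop) (lam : C) : X * X -> Prop :=
  fun p => exists f, T (snd p, f) /\ fst p = sub (scal X lam (snd p)) f.

Definition bounded_everywhere_op (Rl : X * X -> Prop) : Prop :=
  (forall y, exists x, Rl (y, x)) /\
  (forall y x1 x2, Rl (y, x1) -> Rl (y, x2) -> x1 = x2) /\
  (exists M, forall y x, Rl (y, x) -> norm x <= M * norm y).

Definition in_resolvent (T : X * X -> Prop) (lam : C) : Prop :=
  bounded_everywhere_op (resolvent_rel T lam).

(* T_infinity and the operator part T_s = T minus-orthogonal T_infinity *)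
Definition multi_part (T : X * X -> Prop) : X * X -> Prop :=
  fun p => fst p = zero X /\ T p.
Definition op_part (T : X * X -> Prop) : X * X -> Prop :=
  fun p => T p /\ forall q, multi_part T q -> inner2 p q = C0.

Definition restrict (T : X * X -> Prop) (D : X -> Prop) : X * X -> Prop :=
  fun p => T p /\ D (fst p).

Fixpoint in_span (l : list X) (v : X) : Prop :=
  match l with
  | nil => v = zero X
  | u :: l' => exists c w, in_span l' w /\ v = add X (scal X c u) w
  end.
Fixpoint in_span2 (l : list (X * X)) (v : X * X) : Prop :=
  match l with
  | nil => v = zero2
  | u :: l' => exists c w, in_span2 l' w /\ v = add2 (scal2 c u) w
  end.

Definition finite_rank_operator (Rl : X * X -> Prop) : Prop :=
  (forall x f1 f2, Rl (x, f1) -> Rl (x, f2) -> f1 = f2) /\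
  exists l : list X, forall p, Rl p -> in_span l (snd p).

Definition orth_proj_X (M : X -> Prop) (P : X -> X) : Prop :=
  forall x, M (P x) /\ forall y, M y -> inner X (sub x (P x)) y = C0.
Definition orth_proj2 (T : X * X -> Prop) (P : X * X -> X * X) : Prop :=
  forall p, T (P p) /\ forall q, T q -> inner2 (sub2 p (P p)) q = C0.

Definition finite_rank_perturbation (T S : X * X -> Prop) : Prop :=
  exists PT PS, orth_proj2 T PT /\ orth_proj2 S PS /\
    exists l : list (X * X), forall p, in_span2 l (sub2 (PT p) (PS p)).

Definition orth_compl (M : X -> Prop) : X -> Prop :=
  fun y => forall g, M g -> inner X y g = C0.

Definition reduces (X1 : X -> Prop) (T : X * X -> Prop) : Prop :=
  is_subspace_X X1 /\ is_closed_X X1 /\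
  exists P, orth_proj_X X1 P /\
    forall x f, T (x, f) -> T (P x, P f).

End Defs.

From Pilot Require Import Defs.
From Stdlib Require Import Reals List Lra Psatz ClassicalEpsilon Classical.
(* [Reals] exports a binomial coefficient [C] that would shadow the complex numbers. *)
Import Defs.
Open Scope R_scope.

(* A hermitian relation has its multivalued part orthogonal to its domain, and a regular point
   [lam] of [S] forces every vector orthogonal to [D(S)] into [S(0)]; hence [A(0) ⊆ S(0)] and
   [S(0) ⊆ T(0)].

   (i) Where [A_s] vanishes, [T = S + A] and [S] coincide, since the [A]-component of such a
   pair lies in [A(0) ⊆ S(0)].  The kernel of the finite-rank operator [A_s|D] has finite
   codimension, so [T] and [S] both lie in [N + span t] for [N = T ∩ S] and a finite family
   [t].  Then [P_T - P_S] is orthogonal to [N], and its values lie in the span of the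
   components of [t] orthogonal to [N].

   (ii) For [(x,g)] in [A_s] with [x] in [D], pick [(x,f)] in [S]; then [(x,f+g)] is in [T]
   and [(I - P_S)(0,g) = (P_T - P_S)(x,f+g)], so [g ↦ (I - P_S)(0,g)] has finite rank on the
   range of [A_s|D].  It is injective: if [(0,g)] is in [S], then [g ∈ S(0) ⊆ T(0)], while the
   reduction of [A] by [T(0)^⊥] puts [g] into [T(0)^⊥].  So that range is finite-dimensional. *)

Lemma Ceq (a b : C) : Re a = Re b -> Im a = Im b -> a = b.
Proof. destruct a, b; simpl; intros; subst; reflexivity. Qed.

Ltac csolve := apply Ceq; simpl; ring.

Definition Cinv (c : C) : C :=
  mkC (Re c / (Re c * Re c + Im c * Im c)) (- Im c / (Re c * Re c + Im c * Im c)).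

Lemma Cnorm_sq_neq0 (c : C) : c <> C0 -> Re c * Re c + Im c * Im c <> 0.
Proof. intros Hc E. apply Hc. apply Ceq; simpl; nra. Qed.

Lemma quad_nonneg_disc (a b c : R) :
  0 <= c -> (forall t, 0 <= a + 2 * t * b + t * t * c) -> b * b <= a * c.
Proof.
  intros Hc Hq.
  destruct (Req_dec c 0) as [Hc0|Hc0].
  - subst c. destruct (Req_dec b 0) as [Hb|Hb].
    + subst b. pose proof (Hq 0). nra.
    + pose proof (Hq (- (a + 1) / (2 * b))) as Q.
      assert (E : a + 2 * (- (a + 1) / (2 * b)) * b
                  + - (a + 1) / (2 * b) * (- (a + 1) / (2 * b)) * 0 = -1)
        by (field; auto).
      lra.
  - pose proof (Hq (- b / c)) as Q.
    assert (E : a + 2 * (- b / c) * b + - b / c * (- b / c) * c = a - b * b / c)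
      by (field; lra).
    rewrite E in Q.
    assert (0 <= (a - b * b / c) * c) by (apply Rmult_le_pos; lra).
    replace (a * c) with ((a - b * b / c) * c + b * b) by (field; lra). lra.
Qed.

Lemma sqrt_lt_of_sq_lt (x e : R) : 0 <= x -> 0 < e -> x < e * e -> sqrt x < e.
Proof. intros. rewrite <- (sqrt_square e) by lra. apply sqrt_lt_1_alt. lra. Qed.

Lemma sq_le_of_le_sqrt (d x : R) : 0 <= d -> d <= sqrt x -> 0 <= x -> d * d <= x.
Proof. intros. rewrite <- (sqrt_sqrt x) by assumption. apply Rmult_le_compat; lra. Qed.

Lemma sqrt_add_le (a b : R) : 0 <= a -> 0 <= b -> sqrt (a + b) <= sqrt a + sqrt b.
Proof.
  intros. pose proof (sqrt_pos a). pose proof (sqrt_pos b).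
  rewrite <- (sqrt_square (sqrt a + sqrt b)) by lra. apply sqrt_le_1_alt.
  replace ((sqrt a + sqrt b) * (sqrt a + sqrt b))
    with (sqrt a * sqrt a + sqrt b * sqrt b + 2 * (sqrt a * sqrt b)) by ring.
  rewrite !sqrt_sqrt by assumption. nra.
Qed.

Lemma inv_INR_succ_bounds (n : nat) : 0 < / (INR n + 1) <= 1.
Proof.
  pose proof (pos_INR n). split; [apply Rinv_0_lt_compat; lra|].
  rewrite <- Rinv_1. apply Rinv_le_contravar; lra.
Qed.

Lemma inv_INR_succ_le (N n : nat) : (n >= N)%nat -> (N > 0)%nat -> / (INR n + 1) <= / INR N.
Proof.
  intros Hn HN. apply Rinv_le_contravar; [apply lt_0_INR; lia|].
  apply le_INR in Hn. lra.
Qed.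

Section Algebra.
Variable H : HilbertSpace.

Local Notation "x +v y" := (add H x y) (at level 50, left associativity).
Local Notation "a *v x" := (scal H a x) (at level 40).
Local Notation "-v x" := (opp H x) (at level 35).
Local Notation "0v" := (zero H).

Lemma add0l (x : H) : 0v +v x = x.
Proof. rewrite add_comm; apply add_zero. Qed.

Lemma addNl (x : H) : (-v x) +v x = 0v.
Proof. rewrite add_comm; apply add_opp. Qed.

Lemma add_cancel_r (x y z : H) : x +v z = y +v z -> x = y.
Proof.
  intro E.
  rewrite <- (add_zero H x), <- (add_zero H y), <- (add_opp H z), !add_assoc, E.
  reflexivity.
Qed.

Lemma add_cancel_l (x y z : H) : z +v x = z +v y -> x = y.
Proof. rewrite (add_comm H z x), (add_comm H z y). apply add_cancel_r. Qed.

Lemma add_ACA (a b c d : H) : (a +v b) +v (c +v d) = (a +v c) +v (b +v d).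
Proof. rewrite <- !add_assoc. f_equal. rewrite !add_assoc. f_equal. apply add_comm. Qed.

Lemma scal0 (x : H) : C0 *v x = 0v.
Proof.
  apply (add_cancel_l _ _ (C0 *v x)). rewrite add_zero, <- scal_distr_sc.
  f_equal. csolve.
Qed.

Lemma scal_zero (a : C) : a *v 0v = 0v.
Proof.
  apply (add_cancel_l _ _ (a *v 0v)). rewrite <- scal_distr_vec, !add_zero.
  reflexivity.
Qed.

Lemma opp_uniq (x y : H) : x +v y = 0v -> y = -v x.
Proof. intro E. apply (add_cancel_l _ _ x). rewrite E, add_opp. reflexivity. Qed.

Lemma oppE (x : H) : -v x = (Copp C1) *v x.
Proof.
  symmetry; apply opp_uniq.
  rewrite <- (scal_one H x) at 1. rewrite <- scal_distr_sc.
  replace (Cadd C1 (Copp C1)) with C0 by csolve. apply scal0.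
Qed.

Lemma opp_opp (x : H) : -v (-v x) = x.
Proof. symmetry; apply opp_uniq. apply addNl. Qed.

Lemma opp_zero : -v 0v = 0v.
Proof. symmetry; apply opp_uniq. apply add_zero. Qed.

Lemma opp_add (x y : H) : -v (x +v y) = (-v x) +v (-v y).
Proof. symmetry; apply opp_uniq. rewrite add_ACA, !add_opp. apply add_zero. Qed.

Lemma scal_opp (a : C) (x : H) : a *v (-v x) = (Copp a) *v x.
Proof. rewrite oppE, scal_assoc. f_equal. csolve. Qed.

Lemma opp_scal (a : C) (x : H) : -v (a *v x) = (Copp a) *v x.
Proof. rewrite oppE, scal_assoc. f_equal. csolve. Qed.

Lemma sub_eq0 (x y : H) : sub x y = 0v -> x = y.
Proof. intro E. apply (add_cancel_r _ _ (-v y)). rewrite add_opp. exact E. Qed.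

Lemma sub_self (x : H) : sub x x = 0v.
Proof. apply add_opp. Qed.

Lemma sub_zero_r (z : H) : sub z 0v = z.
Proof. unfold sub. rewrite opp_zero, add_zero. reflexivity. Qed.

Lemma sub_sub_cancel_l (p q1 q2 : H) : sub (sub p q1) (sub p q2) = sub q2 q1.
Proof.
  unfold sub. rewrite opp_add, opp_opp, add_ACA, add_opp, add0l, add_comm. reflexivity.
Qed.

Lemma sub_sub_self (u v : H) : sub u (sub u v) = v.
Proof. unfold sub. rewrite opp_add, opp_opp, add_assoc, add_opp, add0l. reflexivity. Qed.

Lemma sub_sub_add (a b c : H) : sub b (sub (a +v b) c) = sub c a.
Proof.
  unfold sub. rewrite opp_add, opp_opp, opp_add, (add_comm H (-v a) (-v b)),
    <- (add_assoc H (-v b)), add_assoc, add_opp, add0l, add_comm. reflexivity.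
Qed.

Lemma sub_add_sub (p a q : H) : sub p a +v sub a q = sub p q.
Proof.
  unfold sub. rewrite <- add_assoc, (add_assoc H (-v a)), addNl, add0l. reflexivity.
Qed.

Lemma sub_sub_sub (a b c e : H) : sub (sub a c) (sub b e) = sub (sub a b) (sub c e).
Proof. unfold sub. rewrite !opp_add, !opp_opp, add_ACA. reflexivity. Qed.

Lemma sub_lin (z1 s1 z2 s2 : H) (c : C) :
  sub z1 s1 +v c *v sub z2 s2 = sub (z1 +v c *v z2) (s1 +v c *v s2).
Proof. unfold sub. rewrite scal_distr_vec, scal_opp, opp_add, opp_scal, add_ACA. reflexivity. Qed.

Lemma lin_comb (a b k : C) (u w w' : H) :
  (a *v u +v w) +v k *v (b *v u +v w') = (Cadd a (Cmul k b)) *v u +v (w +v k *v w').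
Proof. rewrite scal_distr_vec, scal_assoc, add_ACA, scal_distr_sc. reflexivity. Qed.

Lemma inner_add_r (x y z : H) : inner H x (y +v z) = Cadd (inner H x y) (inner H x z).
Proof. rewrite inner_conj, inner_add_l, (inner_conj H y x), (inner_conj H z x). csolve. Qed.

Lemma inner_scal_r (a : C) (x y : H) : inner H x (a *v y) = Cmul (Cconj a) (inner H x y).
Proof. rewrite inner_conj, inner_scal_l, (inner_conj H y x). csolve. Qed.

Lemma inner0l (y : H) : inner H 0v y = C0.
Proof. rewrite <- (scal0 0v), inner_scal_l. csolve. Qed.

Lemma inner0r (y : H) : inner H y 0v = C0.
Proof. rewrite inner_conj, inner0l. csolve. Qed.

Lemma inner_opp_l (x y : H) : inner H (-v x) y = Copp (inner H x y).
Proof. rewrite oppE, inner_scal_l. csolve. Qed.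

Lemma inner_opp_r (x y : H) : inner H x (-v y) = Copp (inner H x y).
Proof. rewrite oppE, inner_scal_r. csolve. Qed.

Lemma inner_sub_l (x y z : H) : inner H (sub x y) z = Cadd (inner H x z) (Copp (inner H y z)).
Proof. unfold sub. rewrite inner_add_l, inner_opp_l. reflexivity. Qed.

Lemma inner_self_im (x : H) : Im (inner H x x) = 0.
Proof. pose proof (f_equal Im (inner_conj H x x)) as E. simpl in E. lra. Qed.

Definition nsq (x : H) : R := Re (inner H x x).

Lemma nsq_ge0 (x : H) : 0 <= nsq x.
Proof. apply inner_pos. Qed.

Lemma nsq_eq0 (x : H) : nsq x = 0 -> x = 0v.
Proof. intro E. apply inner_def. apply Ceq; [exact E | apply inner_self_im]. Qed.

Lemma nsq_add (x y : H) : nsq (x +v y) = nsq x + nsq y + 2 * Re (inner H x y).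
Proof. unfold nsq. rewrite inner_add_l, !inner_add_r, (inner_conj H y x). simpl. ring. Qed.

Lemma nsq_scalR (t : R) (x : H) : nsq (mkC t 0 *v x) = t * t * nsq x.
Proof. unfold nsq. rewrite inner_scal_l, inner_scal_r. simpl. rewrite inner_self_im. ring. Qed.

Lemma nsq_opp (x : H) : nsq (-v x) = nsq x.
Proof. unfold nsq. rewrite inner_opp_l, inner_opp_r. simpl. ring. Qed.

Lemma nsq_sub_sym (x y : H) : nsq (sub x y) = nsq (sub y x).
Proof. rewrite <- nsq_opp. unfold sub. rewrite opp_add, opp_opp, add_comm. reflexivity. Qed.

Lemma parallelogram (a b : H) : nsq (a +v b) + nsq (sub a b) = 2 * nsq a + 2 * nsq b.
Proof. unfold sub. rewrite !nsq_add, nsq_opp, inner_opp_r. simpl. ring. Qed.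

Lemma cauchy_schwarz_re (x y : H) : Re (inner H x y) <= sqrt (nsq x) * sqrt (nsq y).
Proof.
  set (b := Re (inner H x y)).
  assert (D : b * b <= nsq x * nsq y).
  { apply quad_nonneg_disc; [apply nsq_ge0|]. intro t.
    pose proof (nsq_ge0 (x +v (mkC t 0 *v y))) as P.
    rewrite nsq_add, nsq_scalR, inner_scal_r in P. simpl in P.
    unfold b. nra. }
  rewrite <- sqrt_mult by apply nsq_ge0.
  destruct (Rle_or_lt b 0). { pose proof (sqrt_pos (nsq x * nsq y)). lra. }
  rewrite <- (sqrt_square b) by lra. apply sqrt_le_1_alt. lra.
Qed.

Lemma norm_triangle (x y : H) : norm (x +v y) <= norm x + norm y.
Proof.
  change (sqrt (nsq (x +v y)) <= sqrt (nsq x) + sqrt (nsq y)).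
  pose proof (cauchy_schwarz_re x y). pose proof (nsq_ge0 x). pose proof (nsq_ge0 y).
  pose proof (sqrt_pos (nsq x)). pose proof (sqrt_pos (nsq y)).
  rewrite <- (sqrt_square (sqrt (nsq x) + sqrt (nsq y))) by lra.
  apply sqrt_le_1_alt. rewrite nsq_add.
  replace ((sqrt (nsq x) + sqrt (nsq y)) * (sqrt (nsq x) + sqrt (nsq y)))
    with (sqrt (nsq x) * sqrt (nsq x) + sqrt (nsq y) * sqrt (nsq y)
          + 2 * (sqrt (nsq x) * sqrt (nsq y))) by ring.
  rewrite !sqrt_sqrt by assumption. lra.
Qed.

End Algebra.

Section Projection.
Variable H : HilbertSpace.
Variable M : H -> Prop.
Hypothesis M_sub : is_subspace_X M.
Hypothesis M_closed : is_closed_X M.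
Variable p : H.

Local Notation "x +v y" := (add H x y) (at level 50, left associativity).
Local Notation "a *v x" := (scal H a x) (at level 40).

Lemma dist_inf_exists : exists d, 0 <= d /\
  (forall q, M q -> d <= norm (sub p q)) /\
  (forall eps, 0 < eps -> exists q, M q /\ norm (sub p q) < d + eps).
Proof.
  destruct M_sub as [M0 _].
  set (E := fun r => exists q, M q /\ r = - norm (sub p q)).
  assert (E_le0 : forall r, E r -> r <= 0).
  { intros r [q [_ ->]]. pose proof (sqrt_pos (nsq H (sub p q))). unfold norm, nsq in *. lra. }
  destruct (completeness E) as [m [m_ub m_lub]].
  { exists 0. exact E_le0. }
  { exists (- norm (sub p (zero H))), (zero H). auto. }
  exists (- m). split; [|split].
  - assert (m <= 0) by (apply m_lub; exact E_le0). lra.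
  - intros q Mq. assert (E (- norm (sub p q))) as Eq by (exists q; auto).
    apply m_ub in Eq. lra.
  - intros eps Heps. apply NNPP. intro Hn.
    assert (m <= m - eps); [|lra].
    apply m_lub. intros r [q [Mq ->]].
    destruct (Rlt_or_le (norm (sub p q)) (- m + eps)) as [Hl|Hl]; [|lra].
    exfalso; apply Hn; exists q; auto.
Qed.

Section Minimizer.
Variable d : R.
Hypothesis d_ge0 : 0 <= d.
Hypothesis d_lower : forall q, M q -> d <= norm (sub p q).

(* Parallelogram law applied to [p - q1] and [p - q2], bounding the midpoint term below by [d]. *)
Lemma dist_midpoint_estimate (q1 q2 : H) : M q1 -> M q2 ->
  nsq H (sub q1 q2) <= 2 * nsq H (sub p q1) + 2 * nsq H (sub p q2) - 4 * (d * d).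
Proof.
  intros M1 M2.
  set (m := mkC (/ 2) 0 *v (q1 +v q2)).
  assert (Mm : M m) by (destruct M_sub as [_ [Madd Mscal]]; apply Mscal, Madd; assumption).
  assert (Dm : d * d <= nsq H (sub p m)).
  { apply sq_le_of_le_sqrt; [exact d_ge0 | exact (d_lower m Mm) | apply nsq_ge0]. }
  assert (Sum : add H (sub p q1) (sub p q2) = mkC 2 0 *v sub p m).
  { unfold m, sub. rewrite scal_distr_vec, scal_opp, scal_assoc.
    replace (Cmul (Copp (mkC 2 0)) (mkC (/ 2) 0)) with (Copp C1) by (apply Ceq; simpl; field).
    replace (mkC 2 0) with (Cadd C1 C1) by csolve.
    rewrite scal_distr_sc, scal_one, <- oppE, opp_add, add_ACA. reflexivity. }
  pose proof (parallelogram H (sub p q1) (sub p q2)) as Pg.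
  rewrite Sum, nsq_scalR, sub_sub_cancel_l, (nsq_sub_sym H q2 q1) in Pg.
  nra.
Qed.

Lemma minimizing_sequence_cauchy (u : nat -> H) :
  (forall n, M (u n)) -> (forall n, norm (sub p (u n)) < d + / (INR n + 1)) ->
  forall eps, eps > 0 -> exists N, forall n m, (n >= N)%nat -> (m >= N)%nat ->
    norm (sub (u n) (u m)) < eps.
Proof.
  intros Mu Hu.
  assert (Nsq : forall n, nsq H (sub p (u n)) <= (d + / (INR n + 1)) * (d + / (INR n + 1))).
  { intro n. pose proof (nsq_ge0 H (sub p (u n))). pose proof (Hu n) as Hn.
    unfold norm in Hn. fold (nsq H (sub p (u n))) in Hn.
    pose proof (sqrt_pos (nsq H (sub p (u n)))).
    rewrite <- (sqrt_sqrt (nsq H (sub p (u n)))) by assumption.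
    apply Rmult_le_compat; lra. }
  assert (Bound : forall n m,
    nsq H (sub (u n) (u m)) <= (4 * d + 2) * (/ (INR n + 1) + / (INR m + 1))).
  { intros n m. pose proof (dist_midpoint_estimate (u n) (u m) (Mu n) (Mu m)).
    pose proof (Nsq n). pose proof (Nsq m).
    pose proof (inv_INR_succ_bounds n). pose proof (inv_INR_succ_bounds m). nra. }
  intros eps Heps.
  destruct (archimed_cor1 (eps * eps / (2 * (4 * d + 2)))) as [N [HN HN0]].
  { apply Rdiv_lt_0_compat; nra. }
  exists N. intros n m Hn Hm. apply sqrt_lt_of_sq_lt; [apply nsq_ge0 | lra |].
  pose proof (Bound n m). pose proof (inv_INR_succ_le N n Hn HN0).
  pose proof (inv_INR_succ_le N m Hm HN0).
  assert (2 * (4 * d + 2) * / INR N < eps * eps).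
  { apply (Rmult_lt_compat_l (2 * (4 * d + 2))) in HN; [|lra].
    replace (2 * (4 * d + 2) * (eps * eps / (2 * (4 * d + 2)))) with (eps * eps) in HN
      by (field; lra).
    lra. }
  unfold nsq in *. nra.
Qed.

Hypothesis d_approx : forall eps, 0 < eps -> exists q, M q /\ norm (sub p q) < d + eps.

Lemma dist_attained : exists q, M q /\ norm (sub p q) <= d.
Proof.
  assert (Hseq : forall n : nat, exists q, M q /\ norm (sub p q) < d + / (INR n + 1)).
  { intro n. apply d_approx. apply inv_INR_succ_bounds. }
  destruct (choice _ Hseq) as [u Hu].
  destruct (complete H u (minimizing_sequence_cauchy u (fun n => proj1 (Hu n))
                           (fun n => proj2 (Hu n)))) as [q Hq].
  exists q. split.
  { apply (M_closed u q); [intro n; apply Hu | exact Hq]. }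
  apply Rnot_lt_le. intro Hlt. set (eps := norm (sub p q) - d).
  destruct (Hq (eps / 2)) as [N1 HN1]; [unfold eps; lra|].
  destruct (archimed_cor1 (eps / 2)) as [N2 [HN2 HN20]]; [unfold eps; lra|].
  set (n := Nat.max N1 N2).
  pose proof (HN1 n (Nat.le_max_l _ _)) as Close.
  pose proof (inv_INR_succ_le N2 n (Nat.le_max_r _ _) HN20).
  pose proof (proj2 (Hu n)) as Near.
  pose proof (norm_triangle H (sub p (u n)) (sub (u n) q)) as Tr.
  rewrite sub_add_sub in Tr. unfold eps in *.
  change (norm (sub (u n) q) < (norm (sub p q) - d) / 2) in Close. lra.
Qed.

End Minimizer.

Lemma nearest_point_orthogonal (q : H) : M q ->
  (forall r, M r -> norm (sub p q) <= norm (sub p r)) ->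
  forall r, M r -> inner H (sub p q) r = C0.
Proof.
  intros Mq Hmin.
  assert (ReZero : forall r, M r -> Re (inner H (sub p q) r) = 0).
  { intros r Mr.
    assert (D : Re (inner H (sub p q) r) * Re (inner H (sub p q) r) <= 0 * nsq H r).
    { apply quad_nonneg_disc; [apply nsq_ge0|]. intro t.
      assert (Mqr : M (q +v mkC (- t) 0 *v r))
        by (destruct M_sub as [_ [Madd Mscal]]; auto).
      pose proof (Hmin _ Mqr) as Ht.
      assert (E : sub p (q +v mkC (- t) 0 *v r) = sub p q +v mkC t 0 *v r).
      { unfold sub. rewrite opp_add, opp_scal, add_assoc. do 3 f_equal. csolve. }
      rewrite E in Ht. unfold norm in Ht. apply sqrt_le_0 in Ht; try apply inner_pos.
      fold (nsq H (sub p q)) (nsq H (sub p q +v mkC t 0 *v r)) in Ht.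
      rewrite nsq_add, nsq_scalR, inner_scal_r in Ht. simpl in Ht. nra. }
    nra. }
  intros r Mr. apply Ceq.
  - apply ReZero, Mr.
  - assert (Mir : M (mkC 0 1 *v r)) by (destruct M_sub as [_ [_ Mscal]]; auto).
    pose proof (ReZero _ Mir) as E. rewrite inner_scal_r in E. simpl in *. lra.
Qed.

Lemma nearest_point_exists : exists q, M q /\ forall r, M r -> inner H (sub p q) r = C0.
Proof.
  destruct dist_inf_exists as [d [d_ge0 [d_lower d_approx]]].
  destruct (dist_attained d d_ge0 d_lower d_approx) as [q [Mq Hq]].
  exists q. split; [exact Mq|]. apply nearest_point_orthogonal; [exact Mq|].
  intros r Mr. specialize (d_lower r Mr). lra.
Qed.

End Projection.

Lemma orth_proj_exists (H : HilbertSpace) (M : H -> Prop) :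
  is_subspace_X M -> is_closed_X M -> exists P, orth_proj_X M P.
Proof.
  intros M_sub M_closed.
  exact (choice _ (nearest_point_exists H M M_sub M_closed)).
Qed.

Section ProductSpace.
Variable X : HilbertSpace.

Definition opp2 (p : X * X) : X * X := (opp X (fst p), opp X (snd p)).

Lemma add2_assoc (x y z : X * X) : add2 x (add2 y z) = add2 (add2 x y) z.
Proof. unfold add2; simpl. rewrite !add_assoc. reflexivity. Qed.

Lemma add2_comm (x y : X * X) : add2 x y = add2 y x.
Proof. unfold add2; rewrite (add_comm X (fst x)), (add_comm X (snd x)). reflexivity. Qed.

Lemma add2_zero (x : X * X) : add2 x zero2 = x.
Proof. destruct x; unfold add2, zero2; simpl; rewrite !add_zero. reflexivity. Qed.

Lemma add2_opp (x : X * X) : add2 x (opp2 x) = zero2.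
Proof. unfold add2, opp2, zero2; simpl; rewrite !add_opp. reflexivity. Qed.

Lemma scal2_one (x : X * X) : scal2 C1 x = x.
Proof. destruct x; unfold scal2; simpl; rewrite !scal_one. reflexivity. Qed.

Lemma scal2_assoc a b (x : X * X) : scal2 a (scal2 b x) = scal2 (Cmul a b) x.
Proof. unfold scal2; simpl; rewrite !scal_assoc. reflexivity. Qed.

Lemma scal2_distr_vec a (x y : X * X) : scal2 a (add2 x y) = add2 (scal2 a x) (scal2 a y).
Proof. unfold scal2, add2; simpl; rewrite !scal_distr_vec. reflexivity. Qed.

Lemma scal2_distr_sc a b (x : X * X) : scal2 (Cadd a b) x = add2 (scal2 a x) (scal2 b x).
Proof. unfold scal2, add2; simpl; rewrite !scal_distr_sc. reflexivity. Qed.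

Lemma inner2_add_l (x y z : X * X) : inner2 (add2 x y) z = Cadd (inner2 x z) (inner2 y z).
Proof. unfold inner2, add2; simpl; rewrite !inner_add_l. csolve. Qed.

Lemma inner2_scal_l a (x y : X * X) : inner2 (scal2 a x) y = Cmul a (inner2 x y).
Proof. unfold inner2, scal2; simpl; rewrite !inner_scal_l. csolve. Qed.

Lemma inner2_conj (x y : X * X) : inner2 y x = Cconj (inner2 x y).
Proof. unfold inner2; rewrite (inner_conj X (fst y)), (inner_conj X (snd y)). csolve. Qed.

Lemma inner2_pos (x : X * X) : 0 <= Re (inner2 x x).
Proof.
  unfold inner2; simpl. pose proof (inner_pos X (fst x)). pose proof (inner_pos X (snd x)). lra.
Qed.

Lemma inner2_def (x : X * X) : inner2 x x = C0 -> x = zero2.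
Proof.
  intro E. pose proof (f_equal Re E) as E1. unfold inner2 in E1; simpl in E1.
  pose proof (inner_pos X (fst x)). pose proof (inner_pos X (snd x)).
  destruct x as [a b]. unfold zero2. simpl in *. f_equal; apply nsq_eq0; unfold nsq; lra.
Qed.

Lemma norm_fst_le (p : X * X) : norm (fst p) <= norm2 p.
Proof. apply sqrt_le_1_alt. unfold inner2; simpl. pose proof (inner_pos X (snd p)). lra. Qed.

Lemma norm_snd_le (p : X * X) : norm (snd p) <= norm2 p.
Proof. apply sqrt_le_1_alt. unfold inner2; simpl. pose proof (inner_pos X (fst p)). lra. Qed.

Lemma norm2_le (p : X * X) : norm2 p <= norm (fst p) + norm (snd p).
Proof. apply sqrt_add_le; apply inner_pos. Qed.

Lemma add2_complete (u : nat -> X * X) :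
  (forall eps, eps > 0 -> exists N, forall n m, (n >= N)%nat -> (m >= N)%nat ->
     sqrt (Re (inner2 (add2 (u n) (opp2 (u m))) (add2 (u n) (opp2 (u m))))) < eps) ->
  exists l, forall eps, eps > 0 -> exists N, forall n, (n >= N)%nat ->
     sqrt (Re (inner2 (add2 (u n) (opp2 l)) (add2 (u n) (opp2 l)))) < eps.
Proof.
  intro Hc.
  destruct (complete X (fun n => fst (u n))) as [l1 Hl1].
  { intros eps He. destruct (Hc eps He) as [N HN]. exists N. intros n m Hn Hm.
    eapply Rle_lt_trans; [apply (norm_fst_le (sub2 (u n) (u m))) | apply (HN n m Hn Hm)]. }
  destruct (complete X (fun n => snd (u n))) as [l2 Hl2].
  { intros eps He. destruct (Hc eps He) as [N HN]. exists N. intros n m Hn Hm.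
    eapply Rle_lt_trans; [apply (norm_snd_le (sub2 (u n) (u m))) | apply (HN n m Hn Hm)]. }
  exists (l1, l2). intros eps He.
  destruct (Hl1 (eps / 2)) as [N1 HN1]; [lra|].
  destruct (Hl2 (eps / 2)) as [N2 HN2]; [lra|].
  exists (Nat.max N1 N2). intros n Hn.
  pose proof (HN1 n ltac:(lia)). pose proof (HN2 n ltac:(lia)).
  eapply Rle_lt_trans; [apply (norm2_le (sub2 (u n) (l1, l2)))|].
  change (norm (sub (fst (u n)) l1) + norm (sub (snd (u n)) l2) < eps). unfold norm, sub. lra.
Qed.

Definition prodH : HilbertSpace :=
  {| car := X * X; zero := zero2; add := add2; opp := opp2; scal := scal2; inner := inner2;
     add_assoc := add2_assoc; add_comm := add2_comm; add_zero := add2_zero;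
     add_opp := add2_opp; scal_one := scal2_one; scal_assoc := scal2_assoc;
     scal_distr_vec := scal2_distr_vec; scal_distr_sc := scal2_distr_sc;
     inner_add_l := inner2_add_l; inner_scal_l := inner2_scal_l; inner_conj := inner2_conj;
     inner_pos := inner2_pos; inner_def := inner2_def; complete := add2_complete |}.

End ProductSpace.

Section Spans.
Variable H : HilbertSpace.

Local Notation "x +v y" := (add H x y) (at level 50, left associativity).
Local Notation "a *v x" := (scal H a x) (at level 40).
Local Notation "0v" := (zero H).

Lemma subspace_comb (Z : H -> Prop) (z1 z2 : H) (c : C) :
  is_subspace_X Z -> Z z1 -> Z z2 -> Z (z1 +v c *v z2).
Proof. intros [_ [Zadd Zscal]] Z1 Z2. auto. Qed.

Lemma subspace_sub (Z : H -> Prop) (z1 z2 : H) :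
  is_subspace_X Z -> Z z1 -> Z z2 -> Z (sub z1 z2).
Proof. intros sZ Z1 Z2. unfold sub. rewrite oppE. apply subspace_comb; assumption. Qed.

Lemma subspace_intro (Z : H -> Prop) :
  Z 0v -> (forall z1 z2 c, Z z1 -> Z z2 -> Z (z1 +v c *v z2)) -> is_subspace_X Z.
Proof.
  intros Z0 Zc. split; [exact Z0 | split].
  - intros x y Zx Zy. rewrite <- (scal_one H y). auto.
  - intros a x Zx. rewrite <- (add0l H (a *v x)). auto.
Qed.

Lemma span_zero (L : list H) : in_span L 0v.
Proof.
  induction L as [|u L IH]; simpl; [reflexivity|].
  exists C0, 0v. split; auto. rewrite scal0, add_zero. reflexivity.
Qed.

Lemma span_comb (L : list H) (a b : H) (c : C) :
  in_span L a -> in_span L b -> in_span L (a +v c *v b).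
Proof.
  revert a b; induction L as [|u L IH]; simpl; intros a b Ha Hb.
  - subst. rewrite scal_zero, add_zero. reflexivity.
  - destruct Ha as [ca [wa [Hwa ->]]], Hb as [cb [wb [Hwb ->]]].
    exists (Cadd ca (Cmul c cb)), (wa +v c *v wb). split; [apply IH; auto | apply lin_comb].
Qed.

Lemma span_subspace (L : list H) : is_subspace_X (in_span L).
Proof. apply subspace_intro; [apply span_zero | intros; apply span_comb; assumption]. Qed.

Lemma span_app_l (l1 l2 : list H) (a : H) : in_span l1 a -> in_span (l1 ++ l2) a.
Proof.
  revert a; induction l1 as [|u l IH]; simpl; intros a Ha.
  - subst. apply span_zero.
  - destruct Ha as [c [w [Hw ->]]]. exists c, w. auto.
Qed.

Lemma span_app_r (l1 l2 : list H) (a : H) : in_span l2 a -> in_span (l1 ++ l2) a.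
Proof.
  revert a; induction l1 as [|u l IH]; simpl; intros a Ha; [exact Ha|].
  exists C0, a. split; auto. rewrite scal0, add0l. reflexivity.
Qed.

Lemma span_map_orth (f : H -> H) (n : H) (L : list H) (v : H) :
  (forall u, inner H (f u) n = C0) -> in_span (map f L) v -> inner H v n = C0.
Proof.
  intros Hf. revert v. induction L as [|u L IH]; simpl; intros v Hv.
  - subst. apply inner0l.
  - destruct Hv as [c [w [Hw ->]]]. rewrite inner_add_l, inner_scal_l, Hf, IH by auto. csolve.
Qed.

Definition subset_mod_finite (Z K : H -> Prop) : Prop :=
  exists t : list H, forall z, Z z -> exists w, in_span t w /\ K (sub z w).

Lemma subset_mod_finite_mono (Z K K' : H -> Prop) :
  (forall k, K k -> K' k) -> subset_mod_finite Z K -> subset_mod_finite Z K'.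
Proof.
  intros HK [t Ht]. exists t. intros z Zz. destruct (Ht z Zz) as [w [Sw Kw]]. eauto.
Qed.

Lemma proj_fix (T : H -> Prop) (P : H -> H) :
  is_subspace_X T -> orth_proj_X T P -> forall p, T p -> P p = p.
Proof.
  intros sT oP p Tp. destruct (oP p) as [TP O]. symmetry. apply sub_eq0, inner_def.
  apply O, subspace_sub; assumption.
Qed.

Lemma proj_inner (T : H -> Prop) (P : H -> H) :
  orth_proj_X T P -> forall p r, T r -> inner H (P p) r = inner H p r.
Proof.
  intros oP p r Tr. destruct (oP p) as [_ O]. pose proof (O r Tr) as E.
  rewrite inner_sub_l in E.
  apply Ceq; [pose proof (f_equal Re E) | pose proof (f_equal Im E)]; simpl in *; lra.
Qed.

Lemma proj_span (N : H -> Prop) (PN : H -> H) :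
  is_subspace_X N -> orth_proj_X N PN ->
  forall L w, in_span L w ->
    exists w', in_span (map (fun u => sub u (PN u)) L) w' /\ N (sub w w').
Proof.
  intros sN oN. induction L as [|u L IH]; simpl; intros w Hw.
  - subst. exists 0v. split; [reflexivity|]. rewrite sub_zero_r. apply sN.
  - destruct Hw as [c [w0 [Hw0 ->]]]. destruct (IH w0 Hw0) as [w0' [S0 N0]].
    exists (c *v sub u (PN u) +v w0'). split; [exists c, w0'; auto|].
    assert (E : sub (c *v u +v w0) (c *v sub u (PN u) +v w0') = sub w0 w0' +v c *v PN u).
    { rewrite add_comm, (add_comm H (c *v sub u (PN u))), <- sub_lin, sub_sub_self.
      reflexivity. }
    rewrite E. apply subspace_comb; [exact sN | exact N0 | apply oN].
Qed.

Lemma proj_diff_finite_rank (T S N : H -> Prop) (PT PS PN : H -> H) :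
  is_subspace_X N -> orth_proj_X N PN -> (forall n, N n -> T n /\ S n) ->
  orth_proj_X T PT -> orth_proj_X S PS ->
  subset_mod_finite T N -> subset_mod_finite S N ->
  exists l, forall p, in_span l (sub (PT p) (PS p)).
Proof.
  intros sN oN NTS oT oS [t Ht] [s Hs].
  exists (map (fun u => sub u (PN u)) (t ++ s)). intro p.
  destruct (Ht _ (proj1 (oT p))) as [w1 [Sw1 Nw1]].
  destruct (Hs _ (proj1 (oS p))) as [w2 [Sw2 Nw2]].
  set (d := sub (PT p) (PS p)).
  assert (Sw : in_span (t ++ s) (sub w1 w2)).
  { apply subspace_sub; [apply span_subspace | apply span_app_l | apply span_app_r];
      assumption. }
  destruct (proj_span N PN sN oN (t ++ s) _ Sw) as [w' [Sw' Nww']].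
  assert (Nm : N (sub d w')).
  { rewrite <- (sub_add_sub H d (sub w1 w2) w'). apply sN; [|exact Nww'].
    unfold d. rewrite sub_sub_sub. apply subspace_sub; assumption. }
  assert (d_orth : forall n, N n -> inner H d n = C0).
  { intros n Nn. destruct (NTS n Nn) as [Tn Sn]. unfold d.
    rewrite inner_sub_l, (proj_inner T PT oT p n Tn), (proj_inner S PS oS p n Sn). csolve. }
  assert (w'_orth : forall n, N n -> inner H w' n = C0).
  { intros n Nn. apply (span_map_orth (fun u => sub u (PN u)) n (t ++ s) w'); [|exact Sw'].
    intro u. apply oN, Nn. }
  replace d with w'; [exact Sw'|].
  symmetry. apply sub_eq0, inner_def. rewrite inner_sub_l at 1.
  rewrite d_orth, w'_orth by exact Nm. csolve.
Qed.

End Spans.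

Section FiniteRankKernel.
Variables H K : HilbertSpace.
Variable Phi : H -> K -> Prop.
Hypothesis Phi_lin : forall z1 z2 y1 y2 c, Phi z1 y1 -> Phi z2 y2 ->
  Phi (add H z1 (scal H c z2)) (add K y1 (scal K c y2)).

(* Induction on the list spanning the range: one vector [z0] with a nonzero coefficient on the
   head [u] lets every other vector be corrected into the part of [Z] whose range avoids [u]. *)
Lemma finite_rank_kernel_cofinite (L : list K) : forall Z : H -> Prop,
  is_subspace_X Z -> (forall z, Z z -> exists y, Phi z y /\ in_span L y) ->
  subset_mod_finite H Z (fun k => Z k /\ Phi k (zero K)).
Proof.
  induction L as [|u L IH]; intros Z sZ Hz.
  - exists nil. intros z Zz. exists (zero H). rewrite sub_zero_r.
    destruct (Hz z Zz) as [y [Py Sy]]. simpl in Sy. subst y. simpl. auto.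
  - destruct (classic (forall z, Z z -> exists y, Phi z y /\ in_span L y)) as [Hall|Hnall].
    { apply IH; assumption. }
    apply not_all_ex_not in Hnall. destruct Hnall as [z0 Hz0].
    apply imply_to_and in Hz0. destruct Hz0 as [Zz0 Nz0].
    destruct (Hz z0 Zz0) as [y0 [Py0 [c0 [w0 [Hw0 Ey0]]]]].
    assert (c0nz : c0 <> C0).
    { intro E. apply Nz0. exists y0. split; [exact Py0|]. subst. rewrite scal0, add0l. exact Hw0. }
    set (Z' := fun z => Z z /\ exists y, Phi z y /\ in_span L y).
    assert (sZ' : is_subspace_X Z').
    { apply subspace_intro.
      - split; [apply sZ|]. destruct (Hz _ Zz0) as [y1 [Py1 _]].
        exists (zero K). split; [|apply span_zero].
        pose proof (Phi_lin _ _ _ _ (Copp C1) Py1 Py1) as P. rewrite <- !oppE, !add_opp in P.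
        exact P.
      - intros z1 z2 c [Z1 [y1 [P1 S1]]] [Z2 [y2 [P2 S2]]].
        split; [apply subspace_comb; assumption|].
        exists (add K y1 (scal K c y2)). split; [auto | apply span_comb; assumption]. }
    destruct (IH Z' sZ') as [t' Ht']; [intros z [_ Hz']; exact Hz'|].
    exists (z0 :: t'). intros z Zz.
    destruct (Hz z Zz) as [y [Py [c [w [Hw Ey]]]]].
    set (k := Cmul (Copp c) (Cinv c0)).
    assert (Zz' : Z' (add H z (scal H k z0))).
    { split; [apply subspace_comb; assumption|].
      exists (add K y (scal K k y0)). split; [auto|].
      rewrite Ey, Ey0, lin_comb.
      replace (Cadd c (Cmul k c0)) with C0.
      - rewrite scal0, add0l. apply span_comb; assumption.
      - pose proof (Cnorm_sq_neq0 c0 c0nz). unfold k, Cinv. apply Ceq; simpl; field; auto. }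
    destruct (Ht' _ Zz') as [w' [Sw' [[Zw' _] Pw']]].
    exists (add H (scal H (Copp k) z0) w'). split; [exists (Copp k), w'; auto|].
    assert (E : sub z (add H (scal H (Copp k) z0) w') = sub (add H z (scal H k z0)) w').
    { unfold sub. rewrite opp_add, opp_scal, add_assoc.
      replace (Copp (Copp k)) with k by csolve. reflexivity. }
    rewrite E. auto.
Qed.

Lemma finite_rank_injective_finite_dim (L : list K) (Z : H -> Prop) :
  is_subspace_X Z -> (forall z, Z z -> exists y, Phi z y /\ in_span L y) ->
  (forall z, Z z -> Phi z (zero K) -> z = zero H) ->
  exists t, forall z, Z z -> in_span t z.
Proof.
  intros sZ Hz Hinj. destruct (finite_rank_kernel_cofinite L Z sZ Hz) as [t Ht].
  exists t. intros z Zz. destruct (Ht z Zz) as [w [Sw [Zk Pk]]].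
  replace z with w; [exact Sw|]. symmetry. apply sub_eq0, Hinj; assumption.
Qed.

End FiniteRankKernel.

Section Relations.
Variable X : HilbertSpace.
Local Notation PX := (prodH X).
Local Notation "0v" := (zero X).

Lemma in_span2_iff (l : list (X * X)) (v : X * X) : in_span2 l v <-> in_span (X:=PX) l v.
Proof.
  revert v; induction l as [|u l IH]; intro v; simpl; [tauto|].
  split; intros [c [w [Hw E]]]; exists c, w; split; auto; apply IH; auto.
Qed.

Lemma hermitian_mul_orth_dom (T : X * X -> Prop) (h y : X) :
  hermitian T -> T (0v, h) -> dom T y -> inner X h y = C0.
Proof.
  intros hT Th [g Tg]. pose proof (hT _ Th (y, g) Tg) as E. simpl in E.
  rewrite E. apply inner0l.
Qed.

(* For real [lam] write [x = lam y - g] with [(y,g)] in [S]; otherwise [<x,f>] is real by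
   hermiticity, so [Im lam * <x,x> = 0]. *)
Lemma hermitian_regular_annihilator (S : X * X -> Prop) (lam : C) (x f : X) :
  hermitian S -> in_resolvent S lam -> S (x, f) ->
  (forall y g, S (y, g) -> Cmul lam (inner X x y) = inner X x g) -> x = 0v.
Proof.
  intros hS [Hsurj _] Sxf Key.
  destruct (Req_dec (Im lam) 0) as [Hr|Hr].
  - destruct (Hsurj x) as [y [g [Syg Ex]]]. simpl in Syg, Ex.
    apply inner_def. pose proof (Key y g Syg) as K.
    rewrite Ex at 2. unfold sub. rewrite inner_add_r, inner_scal_r, inner_opp_r, <- K.
    apply Ceq; simpl; rewrite Hr; ring.
  - pose proof (Key x f Sxf) as K.
    pose proof (hS _ Sxf (x, f) Sxf) as E1. simpl in E1.
    pose proof (inner_conj X x f) as E2. rewrite E1 in E2.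
    pose proof (f_equal Im E2) as E3. simpl in E3.
    pose proof (f_equal Im K) as K2. simpl in K2. rewrite inner_self_im in K2.
    apply nsq_eq0. unfold nsq.
    assert (Im lam * Re (inner X x x) = 0) as E by lra.
    apply Rmult_integral in E. destruct E; [contradiction | assumption].
Qed.

Lemma resolvent_mul_of_orth_dom (S : X * X -> Prop) (lam : C) (h : X) :
  hermitian S -> is_subspace2 S -> in_resolvent S lam ->
  (forall y, dom S y -> inner X h y = C0) -> S (0v, h).
Proof.
  intros hS sS rS Hh.
  destruct (proj1 rS h) as [x [f [Sxf Eh]]]. simpl in Sxf, Eh.
  assert (x0 : x = 0v).
  { apply (hermitian_regular_annihilator S lam x f hS rS Sxf). intros y g Syg.
    pose proof (Hh y (ex_intro _ g Syg)) as E0.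
    rewrite Eh in E0. unfold sub in E0. rewrite inner_add_l, inner_scal_l, inner_opp_l in E0.
    pose proof (hS _ Sxf (y, g) Syg) as E1. simpl in E1. rewrite E1 in E0.
    apply Ceq; [pose proof (f_equal Re E0) | pose proof (f_equal Im E0)]; simpl in *; lra. }
  subst x. rewrite scal_zero in Eh. unfold sub in Eh. rewrite add0l in Eh.
  pose proof (proj2 (proj2 sS) (Copp C1) _ Sxf) as Sm. unfold scal2 in Sm. simpl in Sm.
  rewrite scal_zero, <- oppE in Sm. rewrite Eh. exact Sm.
Qed.

Lemma mul_incl_of_dom_incl (A S : X * X -> Prop) (lam : C) :
  hermitian A -> hermitian S -> is_subspace2 S -> in_resolvent S lam ->
  (forall y, dom S y -> dom A y) -> forall h, A (0v, h) -> S (0v, h).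
Proof.
  intros hA hS sS rS HdA h Ah. apply (resolvent_mul_of_orth_dom S lam h hS sS rS).
  intros y Dy. apply (hermitian_mul_orth_dom A h y hA Ah), HdA, Dy.
Qed.

Lemma op_part_comb (A : X * X -> Prop) (x1 g1 x2 g2 : X) (c : C) :
  is_subspace2 A -> op_part A (x1, g1) -> op_part A (x2, g2) ->
  op_part A (add X x1 (scal X c x2), add X g1 (scal X c g2)).
Proof.
  intros sA [A1 O1] [A2 O2]. split.
  - exact (subspace_comb PX A (x1, g1) (x2, g2) c sA A1 A2).
  - intros q Hq. change (inner2 (add2 (x1, g1) (scal2 c (x2, g2))) q = C0).
    rewrite inner2_add_l, inner2_scal_l, O1, O2 by exact Hq. csolve.
Qed.

Lemma op_part_functional (A : X * X -> Prop) (x f1 f2 : X) :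
  is_subspace2 A -> op_part A (x, f1) -> op_part A (x, f2) -> f1 = f2.
Proof.
  intros sA [A1 O1] [A2 O2].
  set (q := sub (X:=PX) (x, f1) (x, f2)).
  assert (Mq : multi_part A q) by (split; [apply sub_self | apply subspace_sub; assumption]).
  assert (q0 : q = zero PX).
  { apply inner_def. unfold q at 1. rewrite inner_sub_l.
    change (Cadd (inner2 (x, f1) q) (Copp (inner2 (x, f2) q)) = C0).
    rewrite (O1 q Mq), (O2 q Mq). csolve. }
  apply sub_eq0 in q0. injection q0. auto.
Qed.

Lemma multi_part_closed (A : X * X -> Prop) :
  closed_subspace2 A -> closed_subspace2 (multi_part A).
Proof.
  intros [[A0 [Aa As]] Ac]. split; [split; [|split]|].
  - split; [reflexivity | exact A0].
  - intros p q [Fp Ap] [Fq Aq]. split; [|apply Aa; auto]. simpl. rewrite Fp, Fq. apply add_zero.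
  - intros a p [Fp Ap]. split; [|apply As; auto]. simpl. rewrite Fp. apply scal_zero.
  - intros u l Hu Hc. split; [|apply (Ac u l); [intro n; apply Hu | exact Hc]].
    apply nsq_eq0. apply NNPP. intro Hn.
    assert (Hp : 0 < nsq X (fst l)) by (pose proof (nsq_ge0 X (fst l)); lra).
    destruct (Hc (sqrt (nsq X (fst l)))) as [N HN]; [apply sqrt_lt_R0, Hp|].
    pose proof (Rle_lt_trans _ _ _ (norm_fst_le X _) (HN N (le_n N))) as E.
    destruct (Hu N) as [F _]. simpl in E. rewrite F in E.
    unfold sub, norm in E. rewrite add0l in E. fold (nsq X (opp X (fst l))) in E.
    rewrite nsq_opp in E. lra.
Qed.

Lemma closed_subspace2_meet (T S : X * X -> Prop) :
  closed_subspace2 T -> closed_subspace2 S -> closed_subspace2 (fun p => T p /\ S p).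
Proof.
  intros [[T0 [Ta Ts]] clT] [[S0 [Sa Ss]] clS].
  split; [split; [split; assumption | split]|].
  - intros p q [Tp Sp] [Tq Sq]. split; auto.
  - intros a p [Tp Sp]. split; auto.
  - intros u n Hu Hc. split; [apply (clT u n) | apply (clS u n)]; auto; intro k; apply Hu.
Qed.

Lemma op_part_exists (A : X * X -> Prop) (x g : X) :
  closed_subspace2 A -> A (x, g) -> exists g', op_part A (x, g').
Proof.
  intros cA Axg.
  destruct (orth_proj_exists PX (multi_part A) (proj1 (multi_part_closed A cA))
              (proj2 (multi_part_closed A cA))) as [Pm oPm].
  destruct (oPm (x, g)) as [[Fq Aq] Oq]. simpl in Fq.
  exists (sub g (snd (Pm (x, g)))).
  assert (E : sub (X:=PX) (x, g) (Pm (x, g)) = (x, sub g (snd (Pm (x, g))))).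
  { destruct (Pm (x, g)) as [a b]. simpl in Fq |- *. subst a.
    change ((sub x 0v, sub g b) = (x, sub g b)). rewrite sub_zero_r. reflexivity. }
  rewrite <- E. split; [apply subspace_sub; [apply cA | exact Axg | exact Aq] | exact Oq].
Qed.

End Relations.

Section Perturbation.
Variable X : HilbertSpace.
Local Notation PX := (prodH X).
Local Notation "0v" := (zero X).
Variables T S A : X * X -> Prop.
Hypothesis cT : closed_subspace2 T.
Hypothesis cS : closed_subspace2 S.
Hypothesis cA : closed_subspace2 A.
Hypothesis dom_TS : forall x, dom T x <-> dom S x.
Hypothesis T_sum : forall p, T p <-> rel_sum S A p.

Lemma rel_sum_agree_on_op_kernel :
  (forall h, A (0v, h) -> S (0v, h)) -> forall z, A (fst z, 0v) -> (T z <-> S z).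
Proof.
  intros A0S [x f'] Ax0. simpl in Ax0. rewrite T_sum. split.
  - intros [f [g [Sxf [Axg Ef]]]]. simpl in Sxf, Axg, Ef. subst f'.
    assert (S0g : S (0v, g)).
    { apply A0S. pose proof (subspace_sub PX A (x, g) (x, 0v) (proj1 cA) Axg Ax0) as E.
      change (A (sub x x, sub g 0v)) in E. rewrite sub_self, sub_zero_r in E. exact E. }
    pose proof (proj1 (proj2 (proj1 cS)) _ _ Sxf S0g) as E.
    unfold add2 in E. simpl in E. rewrite add_zero in E. exact E.
  - intros Sxf. exists f', 0v. simpl. rewrite add_zero. auto.
Qed.

Lemma subset_mod_finite_op_kernel (Z : X * X -> Prop) (l : list X) :
  is_subspace2 Z -> (forall z, Z z -> exists g, op_part A (fst z, g) /\ in_span l g) ->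
  subset_mod_finite PX Z (fun z => Z z /\ A (fst z, 0v)).
Proof.
  intros sZ Hl.
  apply (subset_mod_finite_mono PX Z (fun z => Z z /\ op_part A (fst z, 0v))).
  { intros k [Zk [Ak _]]. split; assumption. }
  apply (finite_rank_kernel_cofinite PX X (fun z g => op_part A (fst z, g))) with (L := l);
    [|exact sZ | exact Hl].
  intros z1 z2 y1 y2 c O1 O2. exact (op_part_comb X A _ _ _ _ c (proj1 cA) O1 O2).
Qed.

Lemma finite_rank_perturbation_of_op_part (lam : C) :
  hermitian S -> hermitian A -> (forall x, dom T x -> dom A x) -> in_resolvent S lam ->
  finite_rank_operator (restrict (op_part A) (dom T)) -> finite_rank_perturbation T S.
Proof.
  intros hS hA dom_TA rS [_ [l Hl]].
  assert (A0S : forall h, A (0v, h) -> S (0v, h)).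
  { apply (mul_incl_of_dom_incl X A S lam hA hS (proj1 cS) rS).
    intros y Dy. apply dom_TA, dom_TS, Dy. }
  set (N := fun p => T p /\ S p).
  pose proof (closed_subspace2_meet X T S cT cS) as cN.
  assert (range : forall z : X * X, dom T (fst z) -> exists g, op_part A (fst z, g) /\ in_span l g).
  { intros z Dz. destruct (dom_TA _ Dz) as [g Ag].
    destruct (op_part_exists X A (fst z) g cA Ag) as [g' Og].
    exists g'. split; [exact Og | apply (Hl (fst z, g')); split; assumption]. }
  assert (T_N : subset_mod_finite PX T N).
  { apply (subset_mod_finite_mono PX T (fun z => T z /\ A (fst z, 0v))).
    - intros k [Tk Ak]. split; [exact Tk | apply (rel_sum_agree_on_op_kernel A0S k Ak), Tk].
    - apply (subset_mod_finite_op_kernel _ l); [apply cT|].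
      intros [x f] Tz. apply range. exists f. exact Tz. }
  assert (S_N : subset_mod_finite PX S N).
  { apply (subset_mod_finite_mono PX S (fun z => S z /\ A (fst z, 0v))).
    - intros k [Sk Ak]. split; [apply (rel_sum_agree_on_op_kernel A0S k Ak), Sk | exact Sk].
    - apply (subset_mod_finite_op_kernel _ l); [apply cS|].
      intros [x f] Sz. apply range, dom_TS. exists f. exact Sz. }
  destruct (orth_proj_exists PX T (proj1 cT) (proj2 cT)) as [PT oT].
  destruct (orth_proj_exists PX S (proj1 cS) (proj2 cS)) as [PS oS].
  destruct (orth_proj_exists PX N (proj1 cN) (proj2 cN)) as [PN oN].
  destruct (proj_diff_finite_rank PX T S N PT PS PN (proj1 cN) oN (fun n Nn => Nn) oT oS T_N S_N)
    as [l' Hl'].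
  exists PT, PS. split; [exact oT | split; [exact oS|]].
  exists l'. intro p. apply in_span2_iff, Hl'.
Qed.

Lemma op_part_range_subspace : is_subspace_X (fun v => exists x, dom T x /\ op_part A (x, v)).
Proof.
  apply subspace_intro.
  - exists 0v. split; [exists 0v; apply cT|]. split; [apply cA|]. intros q _. apply (inner0l PX).
  - intros v1 v2 c [x1 [[f1 T1] O1]] [x2 [[f2 T2] O2]].
    exists (add X x1 (scal X c x2)). split.
    + exists (add X f1 (scal X c f2)).
      exact (subspace_comb PX T (x1, f1) (x2, f2) c (proj1 cT) T1 T2).
    + exact (op_part_comb X A _ _ _ _ c (proj1 cA) O1 O2).
Qed.

Lemma reduces_op_part_range (M : X -> Prop) (x v : X) :
  reduces M A -> M x -> op_part A (x, v) -> M v.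
Proof.
  intros [sM [_ [P [oP PA]]]] Mx [Av Ov].
  pose proof (PA x v Av) as APv. rewrite (proj_fix X M P sM oP x Mx) in APv.
  set (q := sub (X:=PX) (x, v) (x, P v)).
  assert (Mq : multi_part A q)
    by (split; [apply sub_self | apply subspace_sub; [apply cA | ..]; assumption]).
  assert (O1 : inner X v (sub v (P v)) = C0).
  { pose proof (Ov q Mq) as E. unfold q in E.
    change (Cadd (inner X x (sub x x)) (inner X v (sub v (P v))) = C0) in E.
    rewrite sub_self, inner0r in E. rewrite <- E. csolve. }
  assert (O2 : inner X (sub v (P v)) (P v) = C0) by apply (oP v), (oP v).
  assert (E : sub v (P v) = 0v).
  { apply inner_def. rewrite inner_sub_l, (inner_conj X (sub v (P v)) (P v)), O1, O2. csolve. }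
  apply sub_eq0 in E. rewrite E. apply oP.
Qed.

Lemma op_part_range_meets_mul_trivially (lam : C) :
  hermitian T -> hermitian S -> in_resolvent T lam ->
  reduces (orth_compl (img_at T (zero X))) A ->
  forall x v, dom T x -> op_part A (x, v) -> S (0v, v) -> v = 0v.
Proof.
  intros hT hS rT red x v Dx Ov Sv.
  assert (Mx : orth_compl (img_at T 0v) x).
  { intros g Tg. rewrite inner_conj, (hermitian_mul_orth_dom X T g x hT Tg Dx). csolve. }
  pose proof (reduces_op_part_range _ x v red Mx Ov) as Mv.
  apply inner_def, Mv.
  apply (mul_incl_of_dom_incl X S T lam hS hT (proj1 cT) rT); [|exact Sv].
  intros y Dy. apply dom_TS, Dy.
Qed.

Lemma op_part_finite_rank_of_perturbation (lam : C) :
  hermitian T -> hermitian S -> in_resolvent T lam ->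
  finite_rank_perturbation T S -> reduces (orth_compl (img_at T (zero X))) A ->
  finite_rank_operator (restrict (op_part A) (dom T)).
Proof.
  intros hT hS rT [PT [PS [oT [oS [l Hl]]]]] red.
  split; [intros x f1 f2 [O1 _] [O2 _]; exact (op_part_functional X A x f1 f2 (proj1 cA) O1 O2)|].
  set (Z := fun v => exists x, dom T x /\ op_part A (x, v)).
  pose proof op_part_range_subspace as sZ.
  set (Phi := fun (v : X) (y : PX) =>
                S (sub (X:=PX) (0v, v) y) /\ forall r, S r -> inner PX y r = C0).
  assert (Phi_lin : forall v1 v2 y1 y2 c, Phi v1 y1 -> Phi v2 y2 ->
            Phi (add X v1 (scal X c v2)) (add PX y1 (scal PX c y2))).
  { intros v1 v2 y1 y2 c [S1 O1] [S2 O2]. split.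
    - pose proof (subspace_comb PX S _ _ c (proj1 cS) S1 S2) as E.
      rewrite sub_lin in E. change (S (sub (X:=PX) (add X 0v (scal X c 0v), add X v1 (scal X c v2))
                                        (add PX y1 (scal PX c y2)))) in E.
      rewrite scal_zero, add_zero in E. exact E.
    - intros r Sr. rewrite inner_add_l, inner_scal_l, O1, O2 by exact Sr. csolve. }
  assert (range : forall v, Z v -> exists y, Phi v y /\ in_span (X:=PX) l y).
  { intros v [x [Dx [Av Ov]]].
    destruct (proj1 (dom_TS x) Dx) as [f Sxf].
    set (p := add PX (x, f) (0v, v)).
    assert (Tp : T p).
    { apply T_sum. exists f, v. simpl. rewrite add_zero. auto. }
    exists (sub (X:=PX) (PT p) (PS p)). split; [split|].
    - rewrite (proj_fix PX T PT (proj1 cT) oT p Tp). unfold p at 1. rewrite sub_sub_add.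
      apply subspace_sub; [apply cS | apply oS | exact Sxf].
    - rewrite (proj_fix PX T PT (proj1 cT) oT p Tp). apply oS.
    - apply in_span2_iff, Hl. }
  destruct (finite_rank_injective_finite_dim X PX Phi Phi_lin l Z sZ range) as [t Ht].
  { intros v [x [Dx Ov]] [Sv _]. rewrite sub_zero_r in Sv.
    exact (op_part_range_meets_mul_trivially lam hT hS rT red x v Dx Ov Sv). }
  exists t. intros [x v] [Ov Dx]. apply Ht. exists x. auto.
Qed.

End Perturbation.

Theorem theorem3p6 (X : HilbertSpace) (T S A : X * X -> Prop) :
  closed_subspace2 T -> closed_subspace2 S -> closed_subspace2 A ->
  hermitian T -> hermitian S -> hermitian A ->
  (forall x, dom T x <-> dom S x) ->
  (forall x, dom T x -> dom A x) ->
  (forall p, T p <-> rel_sum S A p) ->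
  (exists lam, in_resolvent T lam /\ in_resolvent S lam) ->
  (finite_rank_operator (restrict (op_part A) (dom T)) ->
     finite_rank_perturbation T S) /\
  (finite_rank_perturbation T S ->
     reduces (orth_compl (img_at T (zero X))) S ->
     reduces (orth_compl (img_at T (zero X))) A ->
     finite_rank_operator (restrict (op_part A) (dom T))).
Proof.
  intros cT cS cA hT hS hA dom_TS dom_TA T_sum [lam [rT rS]]. split.
  - exact (finite_rank_perturbation_of_op_part X T S A cT cS cA dom_TS T_sum lam hS hA dom_TA rS).
  - intros frp _ redA.
    exact (op_part_finite_rank_of_perturbation X T S A cT cS cA dom_TS T_sum lam hT hS rT frp redA).
Qed.
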